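(* Let $p\neq 0$ be a real number and let $N=\begin{pmatrix} n_{00} & n_{01}\\ n_{10} & n_{11}\end{pmatrix}\in SL(2,\mathbb{Z})$ have eigenvalues $e^{p}$ and $e^{-p}$. Let $(x_0,x_1)$ be an eigenvector of $N$ for the eigenvalue $e^{p}$ and $(y_0,y_1)$ an eigenvector for $e^{-p}$, and put $z_2=x_1y_0-x_0y_1$. Then there is a co-compact discrete subgroup $\Gamma(p)$ of $G(p)$ of the form $$\Gamma(p)=(\Gamma_N\rtimes_{\psi}\mathbb{Z})\rtimes_{\phi} z_2\mathbb{Z},$$ where $\Gamma_N$ is a co-compact discrete subgroup of $H(1,1)$ such that (1) $\Gamma_N$ is invariant under $\psi(m)$ for every $m\in\mathbb{Z}$, and (2) $\Gamma_S=\Gamma_N\rtimes_\psi\mathbb{Z}$ is a co-compact discrete subgroup of $S=H(1,1)\rtimes_\psi\mathbb{R}$ which is invariant under $\phi(t)$ for every $t\in z_2\mathbb{Z}$.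
   Context: $H(1,1)$ is the $3$-dimensional Heisenberg group of real upper triangular unipotent $3\times 3$ matrices $\begin{pmatrix}1&x&z\\0&1&y\\0&0&1\end{pmatrix}$, identified with $\mathbb{R}^3$ with coordinates $(x,y,z)$, so $(x,y,z)(x',y',z')=(x+x',y+y',z+z'+xy')$. For $u\in\mathbb{R}$, $\psi(u)\in\mathrm{Aut}(H(1,1))$ is $\psi(u)(x,y,z)=(e^{pu}x,e^{-pu}y,z)$, and $S=H(1,1)\rtimes_\psi\mathbb{R}$ is $\mathbb{R}^4$ with coordinates $(x,y,z,u)$ and product $(x,y,z,u)(x',y',z',u')=(x+e^{pu}x',\,y+e^{-pu}y',\,z+z'+xe^{-pu}y',\,u+u')$. For $t\in\mathbb{R}$, $\phi(t)\in\mathrm{Aut}(S)$ is $\phi(t)(x,y,z,u)=(x,y,z+tu,u)$, and $G(p)=S\rtimes_\phi\mathbb{R}$ is $\mathbb{R}^5$ with coordinates $(x,y,z,u,t)$ and product $(x,y,z,u,t)(x',y',z',u',t')=(x+e^{pu}x',\,y+e^{-pu}y',\,z+z'+xe^{-pu}y'+tu',\,u+u',\,t+t')$. For a subgroup $\Gamma_N\subset H(1,1)$ invariant under $\psi(\mathbb{Z})$, $\Gamma_N\rtimes_\psi\mathbb{Z}$ denotes the subgroup $\{(h,u):h\in\Gamma_N,u\in\mathbb{Z}\}$ of $S$; similarly $\Gamma_S\rtimes_\phi z_2\mathbb{Z}=\{(s,t): s\in\Gamma_S,\ t\in z_2\mathbb{Z}\}\subset G(p)$. *)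

From HB Require Import structures.
From mathcomp Require Import all_boot all_order all_algebra.
From mathcomp Require Import all_classical all_reals all_analysis.
Import numFieldNormedType.Exports.
Set Implicit Arguments. Unset Strict Implicit. Unset Printing Implicit Defensive.
Import Order.TTheory GRing.Theory Num.Theory.
Local Open Scope classical_set_scope.
Local Open Scope ring_scope.

(* Points: H(1,1) = ((x,y),z); S = (((x,y),z),u); G(p) = ((((x,y),z),u),t). *)
Notation H3 R := (R * R * R)%type.
Notation S4 R := (R * R * R * R)%type.
Notation G5 R := (R * R * R * R * R)%type.

Section Groups.
Variables (R : realType) (p : R).

Definition mulH (a b : H3 R) : H3 R :=
  let: (x, y, z) := a in let: (x', y', z') := b in
  (x + x', y + y', z + z' + x * y').
Definition oneH : H3 R := (0, 0, 0).

Definition psi (u : R) (a : H3 R) : H3 R :=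
  let: (x, y, z) := a in (expR (p * u) * x, expR (- (p * u)) * y, z).

Definition mulS (a b : S4 R) : S4 R :=
  let: (x, y, z, u) := a in let: (x', y', z', u') := b in
  (x + expR (p * u) * x', y + expR (- (p * u)) * y',
   z + z' + x * expR (- (p * u)) * y', u + u').
Definition oneS : S4 R := (0, 0, 0, 0).

Definition phi (t : R) (s : S4 R) : S4 R :=
  let: (x, y, z, u) := s in (x, y, z + t * u, u).

Definition mulG (a b : G5 R) : G5 R :=
  let: (x, y, z, u, t) := a in let: (x', y', z', u', t') := b in
  (x + expR (p * u) * x', y + expR (- (p * u)) * y',
   z + z' + x * expR (- (p * u)) * y' + t * u', u + u', t + t').
Definition oneG : G5 R := (0, 0, 0, 0, 0).
End Groups.

Definition is_subgroup (T : Type) (mul : T -> T -> T) (one : T) (A : set T) :=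
  [/\ A one, (forall a b, A a -> A b -> A (mul a b)) &
      (forall a, A a -> exists2 b, A b & mul a b = one)].

Definition discrete_subset (T : topologicalType) (A : set T) :=
  forall a, A a -> exists U : set T, [/\ open U, U a & U `&` A = [set a]].

Definition cocompact (T : topologicalType) (mul : T -> T -> T) (A : set T) :=
  exists K : set T, compact K /\
    forall g, exists k, exists2 a, K k /\ A a & g = mul k a.

Definition is_int (R : realType) (u : R) := exists n : int, u = n%:~R.

(* Gamma_N semidirect_psi Z, as a subset of S *)
Definition semiZ (R : realType) (GN : set (H3 R)) : set (S4 R) :=
  [set s | let: (x, y, z, u) := s in GN (x, y, z) /\ is_int u].

(* Gamma_S semidirect_phi z2 Z, as a subset of G(p) *)
Definition semiZ2 (R : realType) (GS : set (S4 R)) (z2 : R) : set (G5 R) :=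
  [set g | let: (x, y, z, u, t) := g in
           GS (x, y, z, u) /\ exists n : int, t = z2 * n%:~R].

(* Write v |-> (cross v y, cross x v) for the coordinates of the plane along the
   eigenvectors x, y of N, and d = cross x y = -z2.  Since det N = 1, the map
   psi(1), which scales these coordinates by e^p and e^-p, acts on them as N does
   on v.  Hence the image Gamma_N of Z^2 x (d/2)Z under the exponential
   coordinates (v, c) |-> (cross v y, cross x v, cross v y * cross x v / 2 + c d / 2)
   is a lattice of H(1,1) stable under psi(+-1), and under central translations
   by integer multiples of d.  It is discrete since these coordinates are
   continuous and integral on Gamma_N, and co-compact since integer parts
   decompose every point as (unit cube) * Gamma_N.  These three properties pass
   from A to A x cZ in a semidirect product of H by R whenever cZ preserves A;
   applying this to psi and then to phi yields Gamma_S and Gamma(p). *)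

From HB Require Import structures.
From mathcomp Require Import all_boot all_order all_algebra.
From mathcomp Require Import all_classical all_reals all_analysis.
From mathcomp Require Import ring lra zify.
Import Order.TTheory GRing.Theory Num.Theory numFieldNormedType.Exports.
Local Open Scope classical_set_scope.
Local Open Scope ring_scope.


Section ContinuityRules.
Context {R : realType} {T : topologicalType}.

Lemma continuous_pair {U V : topologicalType} (f : T -> U) (g : T -> V) :
  continuous f -> continuous g -> continuous (fun t => (f t, g t)).
Proof. by move=> cf cg t; exact: cvg_pair (cf t) (cg t). Qed.

Lemma continuous_fst_comp {U V : topologicalType} (f : T -> U * V) :
  continuous f -> continuous (fun t => (f t).1).
Proof. by move=> cf t; apply: continuous_comp (cf t) _; exact: cvg_fst. Qed.

Lemma continuous_snd_comp {U V : topologicalType} (f : T -> U * V) :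
  continuous f -> continuous (fun t => (f t).2).
Proof. by move=> cf t; apply: continuous_comp (cf t) _; exact: cvg_snd. Qed.

Lemma continuous_addr (f g : T -> R) :
  continuous f -> continuous g -> continuous (fun t => f t + g t).
Proof. by move=> cf cg t; exact: continuousD (cf t) (cg t). Qed.

Lemma continuous_mulr (f g : T -> R) :
  continuous f -> continuous g -> continuous (fun t => f t * g t).
Proof. by move=> cf cg t; exact: continuousM (cf t) (cg t). Qed.

Lemma continuous_oppr (f : T -> R) :
  continuous f -> continuous (fun t => - f t).
Proof. by move=> cf t; exact: continuousN (cf t). Qed.

Lemma continuous_expR_comp (f : T -> R) :
  continuous f -> continuous (fun t => expR (f t)).
Proof. by move=> cf t; apply: continuous_comp (cf t) _; exact: continuous_expR. Qed.

Lemma continuous_cstr (c : R) : continuous (fun _ : T => c).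
Proof. exact: cst_continuous. Qed.

End ContinuityRules.

Ltac continuity :=
  lazymatch goal with |- continuous ?f =>
  lazymatch f with
  | fun _ => ?c => first [exact: continuous_cstr | exact: cst_continuous]
  | fun _ => (_, _) => apply: continuous_pair; continuity
  | fun _ => _ + _ => apply: continuous_addr; continuity
  | fun _ => _ * _ => apply: continuous_mulr; continuity
  | fun _ => - _ => apply: continuous_oppr; continuity
  | fun _ => expR _ => apply: continuous_expR_comp; continuity
  | fun _ => (_).1 => apply: continuous_fst_comp; continuity
  | fun _ => (_).2 => apply: continuous_snd_comp; continuity
  | fun t => t => by move=> ?
  | @fst _ _ => by move=> ?; exact: cvg_fst
  | @snd _ _ => by move=> ?; exact: cvg_snd
  end end.

Section Discreteness.

Lemma discrete_subset_setX {T U : topologicalType} {A : set T} {B : set U} :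
  discrete_subset A -> discrete_subset B -> discrete_subset (A `*` B).
Proof.
move=> dA dB [a b] [/= Aa Bb].
have [V [oV Va VA]] := dA a Aa; have [W [oW Wb WB]] := dB b Bb.
exists (fst @^-1` V `&` snd @^-1` W); split.
- apply: openI; apply: open_comp => // q _; [exact: cvg_fst | exact: cvg_snd].
- by [].
apply/seteqP; split => [[a' b'] [[/= Va' Wb'] [/= Aa' Bb']]|_ ->] //.
have : (V `&` A) a' by []; rewrite VA => ->.
by have : (W `&` B) b' by []; rewrite WB => ->.
Qed.

Lemma discrete_subset_comap {T U : topologicalType} (f : T -> U)
    (A : set T) (B : set U) :
  continuous f -> {in A &, injective f} -> f @` A `<=` B ->
  discrete_subset B -> discrete_subset A.
Proof.
move=> cf injf fAB dB a Aa.
have [V [oV Vfa VB]] := dB (f a) (fAB _ (imageP f Aa)).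
exists (f @^-1` V); split => //; first exact: open_comp.
apply/seteqP; split => [b [/= Vfb Ab]|_ ->] //.
have : (V `&` B) (f b) by split => //; apply: fAB; exists b.
rewrite VB => /= fab; apply: injf; rewrite ?inE //.
Qed.

Context {R : realType}.

Lemma discrete_subset_int : discrete_subset (@is_int R).
Proof.
move=> _ [n ->]; exists (ball (n%:~R : R) 1); split.
- exact: ball_open.
- exact: ballxx.
apply/seteqP; split => [b [+ [m mb]]|_ ->]; last by split; [exact: ballxx | exists n].
rewrite -ball_normE /= {b}mb -intrB -intr_norm (ltr_int R _ 1) => /ltr_normlP [h1 h2].
by congr intr; lia.
Qed.

Definition int_multiples (c : R) : set R := [set t | exists n : int, t = c * n%:~R].

Lemma discrete_subset_int_multiples (c : R) :
  c != 0 -> discrete_subset (int_multiples c).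
Proof.
move=> c0; apply: (@discrete_subset_comap R R (fun t => t / c) _ (@is_int R)).
- continuity.
- by move=> t t' _ _ /(congr1 ( *%R^~ c)); rewrite !divfK.
- by move=> _ [_ [n ->] <-]; exists n; rewrite mulrC mulKf.
- exact: discrete_subset_int.
Qed.

End Discreteness.

Lemma floor_frac_itv {R : realType} (v : R) :
  `[0, 1]%classic (v - (Num.floor v)%:~R).
Proof.
have /andP [h1 h2] := floor_itv v; rewrite intrD in h2.
by rewrite /= in_itv /=; apply/andP; split; lra.
Qed.

Definition sdmul {R : realType} {H : Type} (mul : H -> H -> H) (act : R -> H -> H)
  (g g' : H * R) : H * R := (mul g.1 (act g.2 g'.1), g.2 + g'.2).

Section SemidirectByReals.
Context {R : realType} {H : topologicalType} {mul : H -> H -> H} {one : H}.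
Context {act : R -> H -> H}.

Hypothesis act_mul : forall u a b, act u (mul a b) = mul (act u a) (act u b).
Hypothesis act_add : forall u v a, act (u + v) a = act u (act v a).
Hypothesis act0 : forall a, act 0 a = a.

Lemma actK u : cancel (act (- u)) (act u).
Proof. by move=> a; rewrite -act_add subrr act0. Qed.


Context {c : R} {A : set H}.

Lemma act_invariant_int_multiples :
  (forall a, A a -> A (act c a)) -> (forall a, A a -> A (act (- c) a)) ->
  forall u, int_multiples c u -> forall a, A a -> A (act u a).
Proof.
move=> Ac AN _ [n ->]; elim/int_rec: n => [|n IH|n IH] a Aa.
- by rewrite mulr0 act0.
- by rewrite intS intrD mulrDr mulr1 act_add; apply/Ac/IH.
- by rewrite intS opprD intrD mulrDr mulrN1 act_add; apply/AN/IH.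
Qed.

Hypothesis A_act : forall u, int_multiples c u -> forall a, A a -> A (act u a).

Lemma image_act_int_multiples (n : int) : act (c * n%:~R) @` A = A.
Proof.
apply/seteqP; split => [_ [a Aa <-]|a Aa]; first by apply: A_act => //; exists n.
exists (act (- (c * n%:~R)) a); last exact: actK.
by apply: A_act => //; exists (- n); rewrite intrN mulrN.
Qed.

Lemma is_subgroup_sdmul :
  is_subgroup mul one A -> is_subgroup (sdmul mul act) (one, 0) (A `*` int_multiples c).
Proof.
move=> [A1 AM AV]; split.
- by split => //; exists 0; rewrite mulr0.
- move=> [a _] [a' _] [/= Aa [n ->]] [/= Aa' [n' ->]]; split => /=.
  + by apply/AM/A_act => //; exists n.
  + by exists (n + n'); rewrite intrD mulrDr.
- move=> [a _] [/= Aa [n ->]]; have [a' Aa' aa'] := AV a Aa.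
  exists (act (c * (- n)%:~R) a', c * (- n)%:~R).
  + by split => /=; [apply: A_act => //; exists (- n) | exists (- n)].
  + by rewrite /sdmul /= intrN mulrN actK aa' subrr.
Qed.

Lemma cocompact_sdmul :
  c != 0 -> continuous (fun q : H * R => act q.2 q.1) ->
  cocompact mul A -> cocompact (sdmul mul act) (A `*` int_multiples c).
Proof.
move=> c0 cact [K [cK KA]].
pose F (q : H * R) := (act (c * q.2) q.1, c * q.2).
exists (F @` (K `*` `[0, 1]%classic)); split.
  apply: continuous_compact; last exact: (compact_setX cK (@segment_compact R 0 1)).
  apply: continuous_subspaceT; apply: continuous_pair; last by continuity.
  have cg : continuous (fun q : H * R => (q.1, c * q.2)) by continuity.
  by move=> q; exact: continuous_comp (cg q) (cact _).
move=> [h u]; set n := Num.floor (u / c); set s := u / c - n%:~R.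
have [k [a [Kk Aa] e]] := KA (act (- (c * s)) h).
exists (F (k, s)), (a, c * n%:~R).
- split; last by split => //; exists n.
  by exists (k, s) => //; split => //; exact: floor_frac_itv.
rewrite /sdmul /F /= -act_mul -e actK -mulrDr /s subrK mulrC divfK //.
Qed.

Lemma lattice_sdmul :
  c != 0 -> continuous (fun q : H * R => act q.2 q.1) ->
  is_subgroup mul one A -> discrete_subset A -> cocompact mul A ->
  [/\ is_subgroup (sdmul mul act) (one, 0) (A `*` int_multiples c),
      discrete_subset (A `*` int_multiples c) &
      cocompact (sdmul mul act) (A `*` int_multiples c)].
Proof.
move=> c0 cact Asub Adisc Acc; split.
- exact: is_subgroup_sdmul.
- by apply: discrete_subset_setX => //; exact: discrete_subset_int_multiples.
- exact: cocompact_sdmul.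
Qed.

End SemidirectByReals.

Section Actions.
Context {R : realType} (p : R).

Lemma psiE u (h : H3 R) :
  psi p u h = (expR (p * u) * h.1.1, expR (- (p * u)) * h.1.2, h.2).
Proof. by case: h => [[]]. Qed.

Lemma psi_add u v h : psi p (u + v) h = psi p u (psi p v h).
Proof. by rewrite !psiE /= mulrDr opprD !expRD !mulrA. Qed.

Lemma psi0 h : psi p 0 h = h.
Proof. by case: h => [[a b] c]; rewrite psiE /= mulr0 oppr0 expR0 !mul1r. Qed.

Lemma psi_mulH u a b : psi p u (mulH a b) = mulH (psi p u a) (psi p u b).
Proof.
case: a => [[a1 a2] a3]; case: b => [[b1 b2] b3]; rewrite !psiE /mulH /=.
have e0 : expR (p * u) != 0 by rewrite gt_eqF ?expR_gt0.
by congr (_, _, _); rewrite ?expRN; field.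
Qed.

Lemma continuous_psi : continuous (fun q : H3 R * R => psi p q.2 q.1).
Proof.
have -> : (fun q : H3 R * R => psi p q.2 q.1) =
  (fun q => (expR (p * q.2) * q.1.1.1, expR (- (p * q.2)) * q.1.1.2, q.1.2)).
  by apply/funext => q; rewrite psiE.
by continuity.
Qed.

Lemma phiE t (s : S4 R) : phi t s = (s.1.1, s.1.2 + t * s.2, s.2).
Proof. by case: s => [[[]]]. Qed.

Lemma phi_add (t t' : R) (s : S4 R) : phi (t + t') s = phi t (phi t' s).
Proof. by rewrite !phiE /=; congr (_, _, _); ring. Qed.

Lemma phi0 (s : S4 R) : phi 0 s = s.
Proof. by case: s => [[[a b] c] u]; rewrite phiE /= mul0r addr0. Qed.

Lemma phi_mulS (t : R) a b : phi t (mulS p a b) = mulS p (phi t a) (phi t b).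
Proof.
case: a => [[[a1 a2] a3] a4]; case: b => [[[b1 b2] b3] b4]; rewrite /mulS /phi /=.
by congr (_, _, _, _); ring.
Qed.

Lemma continuous_phi : continuous (fun q : S4 R * R => phi q.2 q.1).
Proof.
have -> : (fun q : S4 R * R => phi q.2 q.1) =
  (fun q => (q.1.1.1, q.1.1.2 + q.2 * q.1.2, q.1.2)).
  by apply/funext => q; rewrite phiE.
by continuity.
Qed.

Lemma mulSE : mulS p = sdmul (@mulH R) (psi p).
Proof.
apply/funext => -[[[a1 a2] a3] a4]; apply/funext => -[[[b1 b2] b3] b4].
by rewrite /mulS /sdmul /mulH psiE /=; congr (_, _, _, _); ring.
Qed.

Lemma mulGE : mulG p = sdmul (mulS p) (@phi R).
Proof.
apply/funext => -[[[[a1 a2] a3] a4] a5]; apply/funext => -[[[[b1 b2] b3] b4] b5].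
by rewrite /mulG /sdmul /mulS /phi /=; congr (_, _, _, _, _); ring.
Qed.

End Actions.

Lemma semiZE {R : realType} (A : set (H3 R)) : semiZ A = A `*` int_multiples 1.
Proof.
apply/funext => -[[[a b] c] u]; apply/propext.
by split => /= -[Aa [n ->]]; split => //; exists n; rewrite mul1r.
Qed.

Lemma semiZ2E {R : realType} (A : set (S4 R)) z2 :
  semiZ2 A z2 = A `*` int_multiples z2.
Proof. by apply/funext => -[[[[a b] c] u] t]. Qed.

Lemma expR_neq0 {R : realType} (v : R) : expR v != 0.
Proof. by rewrite gt_eqF ?expR_gt0. Qed.

Definition cross {R : comPzRingType} (u v : R * R) : R := u.1 * v.2 - u.2 * v.1.

Lemma is_intE {R : realType} (u : R) : is_int u = (u \is a Num.int).
Proof. by apply/propext; split => /intrP. Qed.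

Definition lattice_point {R : realType} (x y : R * R) (q : R * R * R) : H3 R :=
  (cross q.1 y, cross x q.1,
   cross q.1 y * cross x q.1 / 2 + q.2 * (cross x y / 2)).

Definition lattice_coord {R : realType} (x y : R * R) (h : H3 R) : R * R * R :=
  ((x.1 * h.1.1 + y.1 * h.1.2) / cross x y, (x.2 * h.1.1 + y.2 * h.1.2) / cross x y,
   (h.2 - h.1.1 * h.1.2 / 2) / (cross x y / 2)).

Definition heisenberg_lattice {R : realType} (x y : R * R) : set (H3 R) :=
  lattice_point x y @` (@is_int R `*` @is_int R `*` @is_int R).

Section HeisenbergLattice.
Context {R : realType} {x y : R * R}.
Local Notation d := (cross x y).
Local Notation Gr := (lattice_point x y).
Local Notation L := (heisenberg_lattice x y).

Lemma mulH_lattice_point s t c s' t' c' :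
  mulH (Gr (s, t, c)) (Gr (s', t', c')) =
  Gr (s + s', t + t', c + c' + cross (s, t) (s', t')).
Proof. by rewrite /mulH /lattice_point /cross /=; congr (_, _, _); field. Qed.

Lemma lattice_point_shift q (k : R) :
  ((Gr q).1, (Gr q).2 + k * d) = Gr (q.1, q.2 + k *+ 2).
Proof. by rewrite /lattice_point /=; congr (_, _); field. Qed.

Lemma is_subgroup_heisenberg_lattice : is_subgroup (@mulH R) (@oneH R) L.
Proof.
split.
- exists (0, 0, 0); first by split; [split|]; exists 0.
  by rewrite /lattice_point /cross /oneH /=; congr (_, _, _); ring.
- move=> _ _ [[[s t] c] [[si ti] ci] <-] [[[s' t'] c'] [[si' ti'] ci'] <-].
  rewrite mulH_lattice_point.
  exists (s + s', t + t', c + c' + cross (s, t) (s', t')) => //.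
  move: si ti ci si' ti' ci'; rewrite /= !is_intE => *.
  by split; [split|]; rewrite /= /cross /= ?rpredD ?rpredN ?rpredM.
- move=> _ [[[s t] c] [[si ti] ci] <-].
  exists (Gr (- s, - t, - c)).
    exists (- s, - t, - c) => //; move: si ti ci; rewrite /= !is_intE => *.
    by split; [split|]; rewrite /= rpredN.
  rewrite mulH_lattice_point /lattice_point /cross /oneH /=.
  by congr (_, _, _); ring.
Qed.

Lemma heisenberg_lattice_phi u :
  int_multiples (- d) u -> forall s, (L `*` int_multiples 1) s ->
  (L `*` int_multiples 1) (phi u s).
Proof.
move=> [n ->] [h v] [Lh [k vk]]; rewrite phiE; split => /=; last by exists k.
move: vk Lh => /= -> [q [Zq1 [m e]] <-].
rewrite mul1r -mulrA mulrC mulrN -mulNr -intrM -intrN lattice_point_shift.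
exists (q.1, q.2 + (- (n * k))%:~R *+ 2) => //; split => //.
by exists (m + (- (n * k)) *+ 2); rewrite /= e intrD raddfMn.
Qed.

Hypothesis d_neq0 : d != 0.

Lemma lattice_pointK : cancel Gr (lattice_coord x y).
Proof.
move: d_neq0 => /= d0 [[s t] c]; rewrite /lattice_coord /lattice_point /cross /=.
by congr (_, _, _); field.
Qed.

Lemma lattice_coordK : cancel (lattice_coord x y) Gr.
Proof.
move: d_neq0 => /= d0 [[a b] c]; rewrite /lattice_coord /lattice_point /cross /=.
by congr (_, _, _); field.
Qed.

Lemma discrete_heisenberg_lattice : discrete_subset L.
Proof.
apply: (@discrete_subset_comap _ _ (lattice_coord x y) _
  (@is_int R `*` @is_int R `*` @is_int R)).
- by rewrite /lattice_coord; continuity.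
- by move=> a b _ _; exact: (can_inj lattice_coordK).
- by move=> _ [_ [q Zq <-] <-]; rewrite lattice_pointK.
- by do 2?apply: discrete_subset_setX; exact: discrete_subset_int.
Qed.

Lemma cocompact_heisenberg_lattice : cocompact (@mulH R) L.
Proof.
pose I01 := `[0, 1]%classic : set R.
exists (Gr @` (I01 `*` I01 `*` I01)); split.
  apply: continuous_compact.
    by apply: continuous_subspaceT; rewrite /lattice_point /cross; continuity.
  by do 2?apply: compact_setX; exact: segment_compact.
move=> g; case E : (lattice_coord x y g) => [[s t] c].
set a := Num.floor s; set b := Num.floor t.
set w := c - cross (s - a%:~R, t - b%:~R) (a%:~R, b%:~R); set n := Num.floor w.
exists (Gr (s - a%:~R, t - b%:~R, w - n%:~R)), (Gr (a%:~R, b%:~R, n%:~R)).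
  split; first by eexists => //; split; [split|]; exact: floor_frac_itv.
  by eexists => //; split; [split|]; [exists a | exists b | exists n].
by rewrite mulH_lattice_point !subrK -[g]lattice_coordK E /w.
Qed.

End HeisenbergLattice.

Lemma det_mx22 {R : comPzRingType} (A : 'M[R]_2) :
  \det A = A 0 0 * A 1 1 - A 0 1 * A 1 0.
Proof.
rewrite (expand_det_row _ 0) !big_ord_recr big_ord0 /cofactor !det_mx11 !mxE /=.
rewrite add0r expr0 exprS expr0 mulr1 !mul1r mulN1r mulrN.
by congr (A _ _ * A _ _ - A _ _ * A _ _); apply: val_inj.
Qed.

Definition mx2_apply {R : realType} (N : 'M[int]_2) (v : R * R) : R * R :=
  ((N 0 0)%:~R * v.1 + (N 0 1)%:~R * v.2, (N 1 0)%:~R * v.1 + (N 1 1)%:~R * v.2).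

Section Eigenbasis.
Context {R : realType} {p : R} {N : 'M[int]_2} {x y : R * R}.
Hypothesis detN : \det N = 1.
Hypothesis Nx : mx2_apply N x = (expR p * x.1, expR p * x.2).
Hypothesis Ny : mx2_apply N y = (expR (- p) * y.1, expR (- p) * y.2).

Let detNK (a : R) :
  a = ((N 0 0)%:~R * (N 1 1)%:~R - (N 0 1)%:~R * (N 1 0)%:~R) * a.
Proof. by rewrite -!intrM -intrB -det_mx22 detN mul1r. Qed.

Lemma cross_mx2_apply (u v : R * R) :
  cross (mx2_apply N u) (mx2_apply N v) = cross u v.
Proof. by rewrite [RHS]detNK /cross /=; ring. Qed.

Lemma cross_mx2_apply_eigenl (v : R * R) :
  cross (mx2_apply N v) y = expR p * cross v y.
Proof.
have := cross_mx2_apply v y; rewrite Ny /cross /= => <-.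
by have := expR_neq0 p; rewrite expRN => ?; field.
Qed.

Lemma cross_mx2_apply_eigenr (v : R * R) :
  cross x (mx2_apply N v) = expR (- p) * cross x v.
Proof.
have := cross_mx2_apply x v; rewrite Nx /cross /= => <-.
by have := expR_neq0 p; rewrite expRN => ?; field.
Qed.

Lemma psi1_lattice_point (v : R * R) c :
  psi p 1 (lattice_point x y (v, c)) = lattice_point x y (mx2_apply N v, c).
Proof.
rewrite psiE /lattice_point /= mulr1 cross_mx2_apply_eigenl cross_mx2_apply_eigenr.
by have := expR_neq0 p; rewrite expRN => ?; congr (_, _, _); field.
Qed.

Lemma heisenberg_lattice_psi1 h :
  heisenberg_lattice x y h -> heisenberg_lattice x y (psi p 1 h).
Proof.
move=> [[[s t] c] [[si ti] ci] <-]; rewrite psi1_lattice_point.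
exists (mx2_apply N (s, t), c) => //; move: si ti ci; rewrite /= !is_intE => *.
by split; [split|]; rewrite //= ?rpredD ?rpredM ?intr_int.
Qed.

Lemma heisenberg_lattice_psiN1 h :
  heisenberg_lattice x y h -> heisenberg_lattice x y (psi p (-1) h).
Proof.
move=> [[[s t] c] [[si ti] ci] <-].
pose w := ((N 1 1)%:~R * s - (N 0 1)%:~R * t, (N 0 0)%:~R * t - (N 1 0)%:~R * s).
have Nw : mx2_apply N w = (s, t).
  by rewrite /mx2_apply /w /=; congr (_, _); rewrite [RHS]detNK; ring.
rewrite -Nw -psi1_lattice_point -psi_add addNr psi0.
exists (w, c) => //; move: si ti ci; rewrite /= !is_intE => *.
by split; [split|]; rewrite //= ?rpredD ?rpredN ?rpredM ?intr_int.
Qed.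

Lemma heisenberg_lattice_psi u : int_multiples 1 u ->
  forall h, heisenberg_lattice x y h -> heisenberg_lattice x y (psi p u h).
Proof.
exact: (act_invariant_int_multiples (psi_add p) (psi0 p)
  heisenberg_lattice_psi1 heisenberg_lattice_psiN1).
Qed.

End Eigenbasis.

Lemma cross_eigenvectors_neq0 {R : realType} (N : 'M[int]_2) (l m : R) (x y : R * R) :
  l != m -> x != (0, 0) -> y != (0, 0) ->
  mx2_apply N x = (l * x.1, l * x.2) -> mx2_apply N y = (m * y.1, m * y.2) ->
  cross x y != 0.
Proof.
case: x y => [x1 x2] [y1 y2] lm x0 y0 [Nx1 Nx2] [Ny1 Ny2]; apply/eqP => dxy.
have ml : m - l != 0 by rewrite subr_eq0 eq_sym.
have /eqP : (m - l) * (x1 * y1) = (N 0 1)%:~R * cross (x1, x2) (y1, y2).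
  transitivity (x1 * (m * y1) - y1 * (l * x1)); first ring.
  by rewrite -Nx1 -Ny1 /cross /=; ring.
rewrite dxy mulr0 mulf_eq0 (negPf ml) /= => /eqP xy1.
have /eqP : (m - l) * (x2 * y2) = - ((N 1 0)%:~R * cross (x1, x2) (y1, y2)).
  transitivity (x2 * (m * y2) - y2 * (l * x2)); first ring.
  by rewrite -Nx2 -Ny2 /cross /=; ring.
rewrite dxy mulr0 oppr0 mulf_eq0 (negPf ml) /= => /eqP xy2.
have : (x1 ^+ 2 + x2 ^+ 2) * (y1 ^+ 2 + y2 ^+ 2) = 0.
  transitivity ((x1 * y1 + x2 * y2) ^+ 2 + cross (x1, x2) (y1, y2) ^+ 2).
    by rewrite /cross /=; ring.
  by rewrite xy1 xy2 dxy; ring.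
move/eqP; rewrite mulf_eq0 !paddr_eq0 ?sqr_ge0 // !sqrf_eq0.
by case/orP => /andP [/eqP e1 /eqP e2]; [move: x0 | move: y0]; rewrite e1 e2 eqxx.
Qed.

Lemma mx2_apply_colE {R : realType} (N : 'M[int]_2) (x : 'cV[R]_2) (l : R) :
  map_mx intr N *m x = l *: x ->
  mx2_apply N (x 0 0, x 1 0) = (l * x 0 0, l * x 1 0).
Proof.
move=> Nx; have l01 : lift ord0 ord0 = 1 :> 'I_2 by apply: val_inj.
congr (_, _); [move: (congr1 (fun M : 'cV[R]_2 => M 0 0) Nx) |
               move: (congr1 (fun M : 'cV[R]_2 => M 1 0) Nx)];
  by rewrite !mxE big_ord_recl big_ord1 !mxE l01.
Qed.

Lemma cV2_neq0 {R : realType} (x : 'cV[R]_2) : x != 0 -> (x 0 0, x 1 0) != (0, 0).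
Proof.
apply: contra => /eqP [x0 x1]; apply/eqP/matrixP => i j; rewrite mxE [j]ord1.
by have [->|->] : i = 0 \/ i = 1 by case: i => [[|[|//]]] ?; [left|right]; apply: val_inj.
Qed.
Theorem proposition2p2 (R : realType) (p : R) (N : 'M[int]_2)
  (x y : 'cV[R]_2) :
  p != 0 ->
  \det N = 1 ->
  eigenvalue (map_mx intr N : 'M[R]_2) (expR p) ->
  eigenvalue (map_mx intr N : 'M[R]_2) (expR (- p)) ->
  x != 0 -> (map_mx intr N : 'M[R]_2) *m x = expR p *: x ->
  y != 0 -> (map_mx intr N : 'M[R]_2) *m y = expR (- p) *: y ->
  let z2 := x 1 0 * y 0 0 - x 0 0 * y 1 0 in
  exists GN : set (H3 R),
    [/\ is_subgroup (@mulH R) (@oneH R) GN,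
        discrete_subset GN,
        cocompact (@mulH R) GN,
        (forall m : int, psi p m%:~R @` GN = GN) &
        let GS := semiZ GN in
        [/\ is_subgroup (mulS p) (@oneS R) GS,
            discrete_subset GS,
            cocompact (mulS p) GS,
            (forall k : int, phi (z2 * k%:~R) @` GS = GS) &
            let Gam := semiZ2 GS z2 in
            [/\ is_subgroup (mulG p) (@oneG R) Gam,
                discrete_subset Gam &
                cocompact (mulG p) Gam]]].
Proof.
move=> p0 detN _ _ x0 /mx2_apply_colE Nx y0 /mx2_apply_colE Ny z2.
set xv := (x 0 0, x 1 0) in x0 Nx; set yv := (y 0 0, y 1 0) in y0 Ny.
have {}Nx : mx2_apply N xv = (expR p * xv.1, expR p * xv.2) := Nx.
have {}Ny : mx2_apply N yv = (expR (- p) * yv.1, expR (- p) * yv.2) := Ny.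
have d0 : cross xv yv != 0.
  apply: (cross_eigenvectors_neq0 N (expR p) (expR (- p))) => //;
    [|exact: cV2_neq0 | exact: cV2_neq0].
  by apply: contra p0 => /eqP /expR_inj ?; apply/eqP; lra.
have z2E : z2 = - cross xv yv by rewrite /z2 /cross /=; ring.
have z20 : - cross xv yv != 0 by rewrite oppr_eq0.
have L_psi := heisenberg_lattice_psi detN Nx Ny.
have [GS_subgroup GS_discrete GS_cocompact] :=
  lattice_sdmul (psi_mulH p) (psi_add p) (psi0 p) L_psi
    (oner_neq0 R) (continuous_psi p) is_subgroup_heisenberg_lattice
    (discrete_heisenberg_lattice d0) (cocompact_heisenberg_lattice d0).
rewrite -mulSE in GS_subgroup GS_cocompact.
have [Gam_subgroup Gam_discrete Gam_cocompact] :=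
  lattice_sdmul (phi_mulS p) (@phi_add R) (@phi0 R) heisenberg_lattice_phi
    z20 (@continuous_phi R) GS_subgroup GS_discrete GS_cocompact.
rewrite -mulGE in Gam_subgroup Gam_cocompact.
exists (heisenberg_lattice xv yv); rewrite /= semiZE semiZ2E z2E; split => //.
- exact: is_subgroup_heisenberg_lattice.
- exact: discrete_heisenberg_lattice.
- exact: cocompact_heisenberg_lattice.
- move=> m; rewrite -[m%:~R]mul1r.
  exact: (image_act_int_multiples (psi_add p) (psi0 p) L_psi m).
- split => //; first exact: (image_act_int_multiples (@phi_add R) (@phi0 R)
    heisenberg_lattice_phi).
Qed.
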